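(* Let $k$ be a field of characteristic $0$, let $t$ be transcendental over $k$, and let $K=k(t)$. Let $\alpha,a,b,c,d,e,f\in k$ with $a,d$ not both zero, $ae=bd$, $af\neq cd$, $b^2\neq 4ac$ and $e^2\neq 4df$. Let $\lambda\in\operatorname{Emb}(k(t))$ be a $k$-linear embedding with $\lambda(t)=\alpha+\sqrt{\frac{at^2+bt+c}{dt^2+et+f}}$ (for some square root in $\overline{K}$). If $V$ is a simple two-sided vector space over $k(t)$ corresponding to $\lambda$, then $V$ has rank $2$.
   Context: Let $k\subset K$ be fields and $\overline{K}$ a fixed algebraic closure of $K$. A two-sided vector space is a $K\otimes_k K$-module $V$; left (resp. right) multiplication by $K$ means the action of $K\otimes 1$ (resp. $1\otimes K$); ${}_KV$ and $V_K$ denote the corresponding restrictions of scalars. $V$ has rank $n$ if $\dim_K({}_KV)=\dim_K(V_K)=n$. $\operatorname{Emb}(K)$ is the set of $k$-linear field embeddings $K\to\overline{K}$; $G=\operatorname{Aut}(\overline{K}/K)$ acts on it by left composition, and $\lambda^G$ denotes the orbit. For a homomorphism $\phi:K\to M_n(K)$, $K^n_\phi$ denotes the two-sided vector space of row vectors $K^n$ with left action $x\cdot(v_1,\dots,v_n)=(xv_1,\dots,xv_n)$ and right action $v\cdot x=v\phi(x)$. For $K$ perfect and $\lambda\in\operatorname{Emb}(K)$ with $|\lambda^G|=n<\infty$, let $K(\lambda)\subset\overline{K}$ be the composite of $K$ and $\lambda(K)$ (it has $[K(\lambda):K]=n$), choose a basis $\alpha_1,\dots,\alpha_n$ of $K(\lambda)$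 over $K$, define $\lambda_i:K\to K$ by $\lambda(x)=\sum_i\lambda_i(x)\alpha_i$, define $\beta_{ijk}\in K$ by $\alpha_i\alpha_j=\sum_k\beta_{ijk}\alpha_k$, and set $\phi_{ij}(x)=\sum_{k}\beta_{jki}\lambda_k(x)$. The simple two-sided vector space corresponding to $\lambda$ is (up to isomorphism) $K^n_\phi$; by a known classification, $\lambda^G\mapsto K^n_\phi$ is a bijection from finite $G$-orbits in $\operatorname{Emb}(K)$ to isomorphism classes of simple two-sided vector spaces of finite left dimension, and this space has left dimension $|\lambda^G|$. *)

From HB Require Import structures.
From mathcomp Require Import all_boot all_order all_algebra fraction.
Set Implicit Arguments. Unset Strict Implicit. Unset Printing Implicit Defensive.
Import Order.TTheory GRing.Theory Num.Theory.
Local Open Scope ring_scope.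

Notation ratfun k := {fraction {poly k}}.

Definition rcst (k : fieldType) (c : k) : ratfun k := FracField.tofrac (c%:P).
Definition tvar (k : fieldType) : ratfun k := FracField.tofrac 'X.

Definition is_subfield (L : fieldType) (S : L -> Prop) : Prop :=
  [/\ S 0, S 1,
      (forall x y, S x -> S y -> S (x - y)),
      (forall x y, S x -> S y -> S (x * y)) &
      (forall x, S x -> x != 0 -> S x^-1)].

Definition composite (K L : fieldType) (iota lam : K -> L) (x : L) : Prop :=
  forall S : L -> Prop, is_subfield S ->
    (forall y, S (iota y)) -> (forall y, S (lam y)) -> S x.

(* A two-sided vector space is given by an additive group V together with a
   left action [lact] and a right action [ract] of K. *)
Definition left_dim (K : fieldType) (V : zmodType) (lact : K -> V -> V)
    (m : nat) : Prop :=
  exists w : 'I_m -> V,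
    bijective (fun c : 'rV[K]_m => \sum_(i < m) lact (c 0 i) (w i)).

Definition right_dim (K : fieldType) (V : zmodType) (ract : V -> K -> V)
    (m : nat) : Prop :=
  exists w : 'I_m -> V,
    bijective (fun c : 'rV[K]_m => \sum_(i < m) ract (w i) (c 0 i)).

Definition has_rank (K : fieldType) (V : zmodType) (lact : K -> V -> V)
    (ract : V -> K -> V) (m : nat) : Prop :=
  left_dim lact m /\ right_dim ract m.

Definition sub_bimod (K : fieldType) (V : zmodType) (lact : K -> V -> V)
    (ract : V -> K -> V) (W : V -> Prop) : Prop :=
  [/\ W 0, (forall u v, W u -> W v -> W (u + v)),
      (forall x v, W v -> W (lact x v)) &
      (forall x v, W v -> W (ract v x))].

Definition simple_bimod (K : fieldType) (V : zmodType) (lact : K -> V -> V)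
    (ract : V -> K -> V) : Prop :=
  (exists v : V, v != 0) /\
  forall W, sub_bimod lact ract W -> (forall v, W v -> v = 0) \/ (forall v, W v).

Definition phi_of (K : fieldType) (n : nat) (lam : 'I_n -> K -> K)
    (beta : 'I_n -> 'I_n -> 'I_n -> K) (x : K) : 'M[K]_n :=
  \matrix_(i < n, j < n) \sum_(k < n) beta j k i * lam k x.

Definition iso_to_Kn_phi (K : fieldType) (V : zmodType) (lact : K -> V -> V)
    (ract : V -> K -> V) (n : nat) (phi : K -> 'M[K]_n) : Prop :=
  exists f : V -> 'rV[K]_n,
    [/\ bijective f, (forall u v, f (u + v) = f u + f v),
        (forall x v, f (lact x v) = x *: f v) &
        (forall x v, f (ract v x) = f v *m phi x)].

(* Write K = k(t), N = at^2 + bt + c, D = dt^2 + et + f, so that lambda(t) = al + s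
   with s^2 = N/D.  Since ae = bd, N and D are symmetric about a common vertex h, so N D
   is biquadratic in t - h with discriminant (af - cd)^2 != 0, and such a polynomial is
   not a square in k(t).  Hence s is not in K and the composite K(lambda) = K(s) has
   degree 2 over K, i.e. n = 2.  Clearing D in s^2 = N/D and using s = lambda(t - al)
   shows that t is a root of the lambda-image of the quadratic
   (a - (t-al)^2 d) X^2 + (b - (t-al)^2 e) X + (c - (t-al)^2 f), whose discriminant is
   again a biquadratic non-square in t - al; so K(lambda) = lambda(K)(t) also has degree
   2 over lambda(K).  Finally K^n_phi is the K-dual of K(lambda), on which lambda(K) acts
   by multiplication, and a K-linear form l with l(1) != 0 identifies it with K(lambda)
   itself through z |-> (l (z alpha_j))_j; so its right dimension is
   [K(lambda) : lambda(K)] = 2. *)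

From HB Require Import structures.
From mathcomp Require Import all_boot all_order all_algebra fraction generic_quotient.
From mathcomp Require Import ring zify.
From Stdlib Require Import ClassicalEpsilon.
Import Order.TTheory GRing.Theory Num.Theory.
Set Implicit Arguments. Unset Strict Implicit. Unset Printing Implicit Defensive.
Local Open Scope ring_scope.

(** * Squares in k(t) *)

HB.instance Definition _ (k : fieldType) :=
  GRing.RMorphism.copy (@rcst k) (@FracField.tofrac {poly k} \o polyC).

Local Notation "x %:F" := (@FracField.tofrac _ x).

Lemma fraction_numden (R : idomainType) (x : {fraction R}) :
  exists p q, q != 0 /\ x = p%:F / q%:F.
Proof.
elim/quotW: x => r; exists r.1, r.2; split; first exact: denom_ratioP.
unlock FracField.tofrac.
rewrite -[_ / _]/(FracField.mul _ _) -[_^-1]/(FracField.inv _).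
rewrite -FracField.pi_inv -FracField.pi_mul; apply/eqmodP.
rewrite /= /FracField.mulf /FracField.invf FracField.equivfE.
by rewrite !numden_Ratio ?mulf_neq0 ?oner_eq0 ?denom_ratioP // !(mulr1, mul1r) mulrC.
Qed.

Lemma poly_sqr_div (k : fieldType) (p q P : {poly k}) :
  q != 0 -> p ^+ 2 = P * q ^+ 2 -> exists g, P = g ^+ 2.
Proof.
move=> q0 Epq.
have g0 : gcdp p q != 0 by rewrite gcdp_eq0 negb_and q0 orbT.
have cop : coprimep (p %/ gcdp p q) (q %/ gcdp p q).
  by apply: coprimep_div_gcd; rewrite q0 orbT.
(* After cancelling gcd(p, q), q1 divides p1^2 while being coprime to p1. *)
have := divpK (dvdp_gcdl p q); have := divpK (dvdp_gcdr p q).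
move: cop; set p1 := p %/ _; set q1 := q %/ _ => cop Eq Ep.
have q10 : q1 != 0 by apply: contraNneq q0 => q10; rewrite -Eq q10 mul0r.
have Epq1 : p1 ^+ 2 = P * q1 ^+ 2.
  apply: (mulIf (expf_neq0 2 g0)).
  by rewrite -exprMn Ep Epq -{1}Eq exprMn mulrA.
have q1_unit : size q1 = 1%N.
  have : q1 %| p1 * p1 by rewrite -expr2 Epq1 expr2 mulrA dvdp_mull.
  rewrite Gauss_dvdpl ?(coprimep_sym q1) // => q1p1.
  have : q1 %| gcdp p1 q1 by rewrite dvdp_gcd q1p1 dvdpp.
  move=> /dvdp_leq; rewrite gcdp_eq0 negb_and q10 orbT => /(_ isT).
  move: cop; rewrite coprimep_def => /eqP ->.
  by rewrite leq_eqVlt ltnS leqn0 size_poly_eq0 (negbTE q10) orbF => /eqP.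
have [c c0 Eqc] : exists2 c, c != 0 & q1 = c%:P by apply/size_poly1P/eqP.
exists (p1 * c^-1%:P).
by rewrite exprMn Epq1 Eqc -mulrA -!rmorphXn -rmorphM -exprMn mulfV // expr1n mulr1.
Qed.

Lemma tofrac_sqr (k : fieldType) (P : {poly k}) (y : ratfun k) :
  y ^+ 2 = P%:F -> exists g, P = g ^+ 2.
Proof.
have [p [q [q0 ->]]] := fraction_numden y => Ey.
apply: (poly_sqr_div (p := p) q0); apply/eqP; rewrite -tofrac_eq.
have q0' : q%:F != 0 by rewrite tofrac_eq0.
by rewrite tofracXn tofracM tofracXn -Ey expr_div_n divfK ?expf_neq0.
Qed.

Lemma sqr_biquadratic (k : fieldType) (A B C : k) (G : {poly k}) :
  (2%:R : k) != 0 -> A != 0 ->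
  G ^+ 2 = A%:P * 'X^4 + B%:P * 'X^2 + C%:P -> B ^+ 2 = 4%:R * A * C.
Proof.
move=> two A0 EG.
have sizeR : size (A%:P * 'X^4 + B%:P * 'X^2 + C%:P) = 5%N.
  have sizeA : size (A%:P * 'X^4) = 5%N by rewrite size_Cmul ?size_polyXn.
  rewrite -addrA size_polyDl sizeA //.
  apply: (leq_ltn_trans (size_polyD _ _)).
  rewrite gtn_max size_polyC; apply/andP; split; last by case: (C != 0).
  apply: (leq_ltn_trans (size_polyMleq _ _)); rewrite size_polyC size_polyXn.
  by case: (B != 0).
have sizeG : size G = 3%N.
  have G0 : G != 0 by apply/eqP => G0; move: sizeR; rewrite -EG G0 expr0n size_poly0.
  by move: sizeR; rewrite -EG expr2 size_mul //; case: (size G) => // m; lia.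
have coef_eq i : (G * G)`_i = (A%:P * 'X^4 + B%:P * 'X^2 + C%:P)`_i by rewrite -EG.
have [g3 g4] : G`_3 = 0 /\ G`_4 = 0 by rewrite !nth_default ?sizeG.
move: (coef_eq 4%N) (coef_eq 3%N) (coef_eq 2%N) (coef_eq 0%N).
rewrite !coefM !big_ord_recr !big_ord0 /= !coefD !coefCM !coefXn !coefC /= g3 g4.
rewrite !(subnn, subn0, mulr0, mul0r, addr0, add0r, mulr1).
move: G`_0 G`_1 G`_2 => g0 g1 g2 e4 e3 e2 e0.
have g2n : g2 != 0 by apply: contraNneq A0 => g20; rewrite -e4 g20 mulr0.
have g1z : g1 = 0.
  have /eqP : g1 * (2%:R * g2) = 0 by rewrite -e3; ring.
  by rewrite !mulf_eq0 (negbTE two) (negbTE g2n) !orbF => /eqP.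
by rewrite -e2 -e0 -e4 g1z; ring.
Qed.

Lemma biquadratic_nonsqr (k : fieldType) (A B C h : k) (y : ratfun k) :
  (2%:R : k) != 0 -> A != 0 -> B ^+ 2 != 4%:R * A * C ->
  y ^+ 2 != rcst A * (tvar k - rcst h) ^+ 4 + rcst B * (tvar k - rcst h) ^+ 2 + rcst C.
Proof.
move=> two A0 disc; apply/eqP => Ey.
pose P : {poly k} := A%:P * ('X - h%:P) ^+ 4 + B%:P * ('X - h%:P) ^+ 2 + C%:P.
have [g Eg] : exists g, P = g ^+ 2.
  apply: (tofrac_sqr (y := y)); rewrite Ey /P !rmorphD.
  by rewrite (rmorphM _ A%:P) (rmorphM _ B%:P) !rmorphXn rmorphB.
suff /(sqr_biquadratic two A0)/eqP :
    (g \Po ('X + h%:P)) ^+ 2 = A%:P * 'X^4 + B%:P * 'X^2 + C%:P.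
  by rewrite (negbTE disc).
rewrite -rmorphXn -Eg /P !rmorphD (rmorphM _ A%:P) (rmorphM _ B%:P) !rmorphXn rmorphB /=.
by rewrite !comp_polyC comp_polyX addrK.
Qed.

Lemma quadratic_tvar_neq0 (k : fieldType) (d e f : k) :
  d != 0 -> rcst d * tvar k ^+ 2 + rcst e * tvar k + rcst f != 0.
Proof.
move=> d0.
have -> : rcst d * tvar k ^+ 2 + rcst e * tvar k + rcst f
          = (d%:P * 'X^2 + e%:P * 'X + f%:P)%:F.
  by rewrite /rcst /tvar !(tofracD, tofracXn, tofracM).
rewrite tofrac_eq0; apply: contra_neq d0 => /(congr1 (coefp 2)) /=.
by rewrite !coefD !coefCM coefXn coefX coefC coef0 /= mulr1 mulr0 !addr0.
Qed.

Lemma common_vertex (k : fieldType) (a b d e : k) :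
  (2%:R : k) != 0 -> a != 0 -> a * e = b * d ->
  exists h, b = - 2%:R * a * h /\ e = - 2%:R * d * h.
Proof.
move=> two a0 hae; exists (- (b / (2%:R * a))).
have Eb : b = - 2%:R * a * - (b / (2%:R * a)) by field; rewrite two a0.
by split=> //; apply: (mulfI a0); rewrite hae {1}Eb; ring.
Qed.

Lemma quadratic_ratio_nonsqr (k : fieldType) (a b c d e f : k) (y : ratfun k) :
  (2%:R : k) != 0 -> a != 0 -> d != 0 -> a * e = b * d -> a * f != c * d ->
  y ^+ 2 != (rcst a * tvar k ^+ 2 + rcst b * tvar k + rcst c)
            / (rcst d * tvar k ^+ 2 + rcst e * tvar k + rcst f).
Proof.
move=> two a0 d0 hae; have [h [-> ->]] := common_vertex two a0 hae.
have [c' ->] : exists c', c = a * h ^+ 2 + c' by exists (c - a * h ^+ 2); ring.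
have [f' ->] : exists f', f = d * h ^+ 2 + f' by exists (f - d * h ^+ 2); ring.
have D0 := quadratic_tvar_neq0 (- 2%:R * d * h) (d * h ^+ 2 + f') d0.
set N := rcst a * _ + _ + _; set D := rcst d * _ + _ + _ in D0 *.
move=> haf; apply/eqP => Ey.
have disc : (a * f' + d * c') ^+ 2 != 4%:R * (a * d) * (c' * f').
  rewrite -subr_eq0 (_ : _ - _ = (a * (d * h ^+ 2 + f') - (a * h ^+ 2 + c') * d) ^+ 2).
    by rewrite sqrf_eq0 subr_eq0.
  by ring.
move/negP: (biquadratic_nonsqr h (y * D) two (mulf_neq0 a0 d0) disc); apply; apply/eqP.
by rewrite exprMn Ey expr2 mulrA divfK // /N /D; ring.
Qed.

Lemma tvar_quadratic_disc_nonsqr (k : fieldType) (al a b c d e f : k) (y : ratfun k) :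
  (2%:R : k) != 0 -> a != 0 -> a * e = b * d -> a * f != c * d -> e ^+ 2 != 4%:R * d * f ->
  y ^+ 2 != (rcst b - (tvar k - rcst al) ^+ 2 * rcst e) ^+ 2
            - 4%:R * (rcst a - (tvar k - rcst al) ^+ 2 * rcst d)
                   * (rcst c - (tvar k - rcst al) ^+ 2 * rcst f).
Proof.
move=> two a0 hae haf he.
have disc : (4%:R * a * f + 4%:R * c * d - 2%:R * b * e) ^+ 2
            != 4%:R * (e ^+ 2 - 4%:R * d * f) * (b ^+ 2 - 4%:R * a * c).
  have [h [Eb Ee]] := common_vertex two a0 hae.
  rewrite -subr_eq0 (_ : _ - _ = 2%:R ^+ 4 * (a * f - c * d) ^+ 2).
    by rewrite mulf_eq0 negb_or expf_neq0 // sqrf_eq0 subr_eq0.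
  by rewrite Eb Ee; ring.
have he0 : e ^+ 2 - 4%:R * d * f != 0 by rewrite subr_eq0.
rewrite [X in _ != X](_ : _ = rcst (e ^+ 2 - 4%:R * d * f) * (tvar k - rcst al) ^+ 4
    + rcst (4%:R * a * f + 4%:R * c * d - 2%:R * b * e) * (tvar k - rcst al) ^+ 2
    + rcst (b ^+ 2 - 4%:R * a * c)); last by ring.
exact: biquadratic_nonsqr.
Qed.

(** * Quadratic extensions and the composite field *)

Lemma quadratic_root_new (K L : fieldType) (mu : {rmorphism K -> L}) (A B C : K) (th : L) :
  (forall y, y ^+ 2 != B ^+ 2 - 4%:R * A * C) ->
  mu A * th ^+ 2 + mu B * th + mu C = 0 ->
  (forall x, mu x != th) /\ th ^+ 2 = mu (- B / A) * th + mu (- C / A).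
Proof.
move=> disc root.
have A0 : A != 0 by apply: contra_neq (disc B) => ->; rewrite mulr0 mul0r subr0.
split=> [x|].
  apply: contra_neq (disc (2%:R * A * x + B)) => Ex.
  have Q0 : A * x ^+ 2 + B * x + C = 0.
    by apply: (fmorph_inj mu); rewrite rmorph0 !rmorphD (rmorphM _ A) (rmorphM _ B) rmorphXn Ex.
  transitivity (B ^+ 2 - 4%:R * A * C + 4%:R * A * (A * x ^+ 2 + B * x + C)); first by ring.
  by rewrite Q0 mulr0 addr0.
have muA0 : mu A != 0 by rewrite fmorph_eq0.
apply: (mulfI muA0); rewrite !fmorph_div !rmorphN.
have -> : mu A * th ^+ 2 = - (mu B * th + mu C) by apply/eqP; rewrite -addr_eq0 addrA root.
by field.
Qed.

Lemma sqrt_new (K L : fieldType) (mu : {rmorphism K -> L}) (r : K) (s : L) :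
  (forall y, y ^+ 2 != r) -> s ^+ 2 = mu r -> forall x, mu x != s.
Proof.
move=> r_nonsqr Hs x; apply: contra (r_nonsqr x) => /eqP Ex.
by rewrite -(inj_eq (fmorph_inj mu)) rmorphXn Ex Hs.
Qed.

Section Subfield.
Variables (L : fieldType) (S : L -> Prop).
Hypothesis S_subfield : is_subfield S.

Lemma subf0 : S 0. Proof. by case: S_subfield. Qed.
Lemma subf1 : S 1. Proof. by case: S_subfield. Qed.
Lemma subfB x y : S x -> S y -> S (x - y). Proof. by case: S_subfield => _ _ + _ _; apply. Qed.
Lemma subfM x y : S x -> S y -> S (x * y). Proof. by case: S_subfield => _ _ _ + _; apply. Qed.

Lemma subfV x : S x -> S x^-1.
Proof.
case: S_subfield => S0 _ _ _ SV Sx.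
by have [->|x0] := eqVneq x 0; [rewrite invr0 | apply: SV].
Qed.

Lemma subfN x : S x -> S (- x). Proof. by rewrite -sub0r; apply/subfB/subf0. Qed.
Lemma subfD x y : S x -> S y -> S (x + y).
Proof. by move=> Sx Sy; rewrite -[y]opprK; apply/subfB/subfN. Qed.

Lemma subfX x m : S x -> S (x ^+ m).
Proof.
by move=> Sx; elim: m => [|m IHm]; rewrite ?expr0 ?exprS; [apply: subf1 | apply: subfM].
Qed.

Lemma subf_sum (I : Type) (r : seq I) (P : pred I) (F : I -> L) :
  (forall i, P i -> S (F i)) -> S (\sum_(i <- r | P i) F i).
Proof. by move=> SF; apply: big_ind => //; [apply: subf0 | apply: subfD]. Qed.

End Subfield.

Lemma composite_subfield (K L : fieldType) (iota lam : K -> L) :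
  is_subfield (composite iota lam).
Proof.
split=> [S SS _ _ | S SS _ _ | x y Ex Ey S SS Si Sl | x y Ex Ey S SS Si Sl | x Ex _ S SS Si Sl].
- exact: subf0 SS.
- exact: subf1 SS.
- by apply: (subfB SS); [apply: Ex | apply: Ey].
- by apply: (subfM SS); [apply: Ex | apply: Ey].
- by apply: (subfV SS); apply: Ex.
Qed.

Lemma composite_inl {K L : fieldType} (iota lam : K -> L) x : composite iota lam (iota x).
Proof. by move=> S _ + _. Qed.

Lemma composite_inr {K L : fieldType} (iota lam : K -> L) x : composite iota lam (lam x).
Proof. by move=> S _ _ +. Qed.

Lemma composite_sym {K L : fieldType} {iota lam : K -> L} {z : L} :
  composite iota lam z -> composite lam iota z.
Proof. by move=> Ez S SS Sl Si; apply: Ez. Qed.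

Lemma subfield_ratfun_image (k L : fieldType) (mu : {rmorphism ratfun k -> L}) (S : L -> Prop) :
  is_subfield S -> (forall c, S (mu (rcst c))) -> S (mu (tvar k)) -> forall x, S (mu x).
Proof.
move=> SS Sc St x; have [p [q [_ ->]]] := fraction_numden x.
have Spoly r : S (mu r%:F).
  rewrite -[r]coefK poly_def !rmorph_sum; apply: (subf_sum SS) => i _.
  rewrite -mul_polyC !rmorphM !rmorphXn.
  by apply: (subfM SS); [exact: Sc | apply: (subfX SS); exact: St].
by rewrite fmorph_div; apply: (subfM SS) => //; apply: (subfV SS).
Qed.

Definition quad_span (K L : fieldType) (mu : K -> L) (th z : L) : Prop :=
  exists x y, z = mu x + mu y * th.

Section QuadraticExtension.
Variables (K L : fieldType) (mu : {rmorphism K -> L}) (th : L) (be ga : K).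
Hypotheses (th_new : forall x, mu x != th) (th_quad : th ^+ 2 = mu be * th + mu ga).

Lemma quad_coord_eq0 x y : mu x + mu y * th = 0 -> x = 0 /\ y = 0.
Proof.
move=> E; have [y0|y0] := eqVneq y 0.
  by move: E; rewrite y0 rmorph0 mul0r addr0 => /eqP; rewrite fmorph_eq0 => /eqP.
have muy0 : mu y != 0 by rewrite fmorph_eq0.
have /eqP[] := th_new (- x / y).
rewrite fmorph_div rmorphN; apply: (mulfI muy0); rewrite mulrCA divff // mulr1.
by apply/eqP; rewrite eq_sym -addr_eq0 addrC E.
Qed.

Lemma quad_span_subfield : is_subfield (quad_span mu th).
Proof.
have reduce x y x' y' : (mu x + mu y * th) * (mu x' + mu y' * th)
    = mu (x * x' + y * y' * ga) + mu (x * y' + y * x' + y * y' * be) * th.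
  by rewrite -[RHS]addr0 -(subrr (mu (y * y') * th ^+ 2)) {2}th_quad !rmorphD !rmorphM; ring.
split.
- by exists 0, 0; rewrite !rmorph0 mul0r addr0.
- by exists 1, 0; rewrite rmorph1 rmorph0 mul0r addr0.
- by move=> _ _ [x [y ->]] [x' [y' ->]]; exists (x - x'), (y - y'); rewrite !rmorphB; ring.
- by move=> _ _ [x [y ->]] [x' [y' ->]]; do 2 eexists; apply: reduce.
move=> _ [x [y ->]] z0.
pose nm := x * x + x * y * be - y * y * ga.
have Enm : (mu x + mu y * th) * (mu (x + y * be) + mu (- y) * th) = mu nm.
  rewrite reduce [X in mu X * th](_ : _ = 0); last by ring.
  by rewrite rmorph0 mul0r addr0 /nm; congr (mu _); ring.
have nm0 : nm != 0.
  apply: contra_neq z0 => nm0; move/eqP: Enm; rewrite nm0 rmorph0 mulf_eq0.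
  case/orP=> [/eqP // | /eqP /quad_coord_eq0 [Ex Ey]].
  have y0 : y = 0 by rewrite -[y]opprK Ey oppr0.
  by move: Ex; rewrite y0 mul0r addr0 => ->; rewrite rmorph0 mul0r addr0.
exists ((x + y * be) / nm), (- y / nm).
have munm0 : mu nm != 0 by rewrite fmorph_eq0.
apply: (mulfI z0); rewrite mulfV // !fmorph_div.
by rewrite [mu (- y) / _ * th]mulrAC -mulrDl mulrA Enm mulfV.
Qed.

End QuadraticExtension.

Definition free_over (K L : fieldType) (mu : K -> L) (m : nat) (w : 'I_m -> L) : Prop :=
  forall cf : 'I_m -> K, \sum_(i < m) mu (cf i) * w i = 0 -> forall i, cf i = 0.

Definition span_over (K L : fieldType) (mu : K -> L) (m : nat) (w : 'I_m -> L) (z : L) :=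
  exists cf : 'I_m -> K, z = \sum_(i < m) mu (cf i) * w i.

Section PowerBasis.
Variables (K L : fieldType) (mu : {rmorphism K -> L}) (th : L).

Lemma sum_pow2 (cf : 'I_2 -> K) :
  \sum_(i < 2) mu (cf i) * th ^+ i = mu (cf ord0) + mu (cf ord_max) * th.
Proof.
by rewrite big_ord_recr big_ord1 /= expr0 expr1 mulr1; congr (mu (cf _) + _); apply: val_inj.
Qed.

Lemma span_pow2 z : quad_span mu th z -> span_over mu (fun i : 'I_2 => th ^+ i) z.
Proof. by move=> [x [y ->]]; exists (nth 0 [:: x; y]); rewrite sum_pow2. Qed.

Lemma free_pow2 : (forall x, mu x != th) -> free_over mu (fun i : 'I_2 => th ^+ i).
Proof.
move=> th_new cf; rewrite sum_pow2; move=> /(quad_coord_eq0 th_new) [c0 c1] i.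
by case: i => [[|[|//]] ?]; [rewrite -c0 | rewrite -c1]; congr cf; apply: val_inj.
Qed.

Lemma quad_span_pow2 (i : 'I_2) : quad_span mu th (th ^+ i).
Proof.
case: i => [[|[|//]] ?]; [exists 1, 0 | exists 0, 1].
  by rewrite rmorph1 rmorph0 mul0r addr0.
by rewrite rmorph1 rmorph0 mul1r add0r.
Qed.

End PowerBasis.

Lemma composite_quadE (K L : fieldType) (iota lam : {rmorphism K -> L}) (th : L) (be ga : K) :
  (forall x, iota x != th) -> th ^+ 2 = iota be * th + iota ga ->
  composite iota lam th -> (forall x, quad_span iota th (lam x)) ->
  forall z, composite iota lam z <-> quad_span iota th z.
Proof.
move=> th_new th_quad Eth lamQ z; split.
  apply; [exact: quad_span_subfield th_new th_quad | | exact: lamQ].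
  by move=> y; exists y, 0; rewrite rmorph0 mul0r addr0.
have CS := composite_subfield iota lam.
by move=> [x [y ->]]; apply: (subfD CS); [|apply: (subfM CS)] => //; apply: composite_inl.
Qed.

(** * Dimensions and the two-sided space K^n_phi *)

Lemma free_span_leq (K L : fieldType) (mu : {rmorphism K -> L}) m n
    (u : 'I_n -> L) (w : 'I_m -> L) :
  free_over mu u -> (forall i, span_over mu w (u i)) -> (n <= m)%N.
Proof.
move=> u_free /fin_all_exists [cf Ecf].
pose M := \matrix_(i < n, j < m) cf i j.
suff /eqP <- : row_free M by exact: rank_leq_col.
apply/inj_row_free => c cM0; apply/rowP => i; rewrite mxE; apply: u_free i.
transitivity (\sum_j mu ((c *m M) 0 j) * w j); last first.
  by rewrite cM0 big1 // => j _; rewrite mxE rmorph0 mul0r.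
under eq_bigr do rewrite Ecf big_distrr.
rewrite exchange_big; apply: eq_bigr => j _ /=.
rewrite !mxE rmorph_sum big_distrl; apply: eq_bigr => i _.
by rewrite mxE rmorphM mulrA.
Qed.

Lemma basis_card_quad (K L : fieldType) (mu : {rmorphism K -> L}) (E : L -> Prop) (th : L)
    n (alpha : 'I_n -> L) :
  (forall x, mu x != th) -> (forall z, E z <-> quad_span mu th z) ->
  (forall i, E (alpha i)) -> free_over mu alpha -> (forall z, E z -> span_over mu alpha z) ->
  n = 2.
Proof.
move=> th_new Eq alpha_in alpha_free alpha_span; apply/eqP; rewrite eqn_leq; apply/andP; split.
  apply: (free_span_leq (w := fun i : 'I_2 => th ^+ i) alpha_free) => i.
  exact/span_pow2/Eq.
by apply: (free_span_leq (free_pow2 th_new)) => i; apply/alpha_span/Eq/quad_span_pow2.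
Qed.

(* Junk value (an arbitrary family) when z is not in the span of w. *)
Definition coords (K L : fieldType) (mu : K -> L) (m : nat) (w : 'I_m -> L) (z : L) : 'I_m -> K :=
  epsilon (inhabits (fun=> 0)) (fun cf => z = \sum_(i < m) mu (cf i) * w i).

Section Coordinates.
Variables (K L : fieldType) (mu : {rmorphism K -> L}) (m : nat) (w : 'I_m -> L).
Hypothesis w_free : free_over mu w.

Lemma coordsK z : span_over mu w z -> z = \sum_i mu (coords mu w z i) * w i.
Proof. exact: epsilon_spec. Qed.

Lemma coordsE cf i : coords mu w (\sum_j mu (cf j) * w j) i = cf i.
Proof.
have /coordsK Ez : span_over mu w (\sum_j mu (cf j) * w j) by exists cf.
apply/eqP; rewrite -subr_eq0; apply/eqP; move: i; apply: w_free.
by under eq_bigr do rewrite rmorphB mulrBl; rewrite sumrB -Ez subrr.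
Qed.

Lemma coordsB z z' i : span_over mu w z -> span_over mu w z' ->
  coords mu w (z - z') i = coords mu w z i - coords mu w z' i.
Proof.
move=> /coordsK {1}-> /coordsK {1}->; rewrite -sumrB.
under eq_bigr do rewrite -mulrBl -rmorphB.
by rewrite coordsE.
Qed.

Lemma coords_sum p (c : 'I_p -> K) (y : 'I_p -> L) i :
  (forall l, span_over mu w (y l)) ->
  coords mu w (\sum_l mu (c l) * y l) i = \sum_l c l * coords mu w (y l) i.
Proof.
move=> Sy; under eq_bigr do rewrite {1}(coordsK (Sy _)) big_distrr.
rewrite exchange_big /=.
under eq_bigr do under eq_bigr do rewrite mulrA -rmorphM.
by under eq_bigr do rewrite -big_distrl -rmorph_sum; rewrite coordsE.
Qed.

End Coordinates.

Lemma inj_surj_bij (A B : Type) (a0 : A) (h : A -> B) :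
  injective h -> (forall y, exists x, h x = y) -> bijective h.
Proof.
move=> h_inj h_surj; pose g y := epsilon (inhabits a0) (fun x => h x = y).
have gK : cancel g h by move=> y; exact: (epsilon_spec (inhabits a0) _ (h_surj y)).
by exists g => // x; apply: h_inj; rewrite gK.
Qed.

Section KnPhi.
Variables (K L : fieldType) (iota lam : {rmorphism K -> L}) (E : L -> Prop).
Hypotheses (E_subfield : is_subfield E) (iota_in : forall x, E (iota x))
  (lam_in : forall x, E (lam x)).
Variables (n : nat) (alpha : 'I_n -> L).
Hypotheses (alpha_in : forall i, E (alpha i)) (alpha_free : free_over iota alpha)
  (alpha_span : forall z, E z -> span_over iota alpha z).
Variables (lami : 'I_n -> K -> K) (beta : 'I_n -> 'I_n -> 'I_n -> K).
Hypotheses (Hlami : forall x, lam x = \sum_(i < n) iota (lami i x) * alpha i)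
  (Hbeta : forall i j, alpha i * alpha j = \sum_(l < n) iota (beta i j l) * alpha l).
Variables (m : nat) (w : 'I_m -> L).
Hypotheses (w_in : forall i, E (w i)) (w_free : free_over lam w)
  (w_span : forall z, E z -> span_over lam w z).

Lemma lam_mul_alpha x j :
  lam x * alpha j = \sum_i iota (phi_of lami beta x i j) * alpha i.
Proof.
rewrite mulrC Hlami big_distrr /=.
under eq_bigr do rewrite mulrCA Hbeta big_distrr.
rewrite exchange_big; apply: eq_bigr => i _ /=.
rewrite mxE rmorph_sum big_distrl; apply: eq_bigr => l _.
by rewrite rmorphM mulrCA mulrA.
Qed.

Lemma coords1_neq0 : exists i0, coords iota alpha 1 i0 != 0.
Proof.
apply/existsP; apply: contra (oner_neq0 L) => /forallP c0.
rewrite (coordsK (alpha_span (subf1 E_subfield))) big1 // => i _.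
by rewrite (eqP (c0 i)) rmorph0 mul0r.
Qed.

Section Functional.
Variable i0 : 'I_n.
Hypothesis coord1_i0 : coords iota alpha 1 i0 != 0.

Let ell z := coords iota alpha z i0.
Let Psi z : 'rV[K]_n := \row_j ell (z * alpha j).

Let E_alpha z : E z -> forall j, span_over iota alpha (z * alpha j).
Proof. by move=> Ez j; apply/alpha_span/(subfM E_subfield). Qed.

Lemma Psi_sum p (c : 'I_p -> K) (y : 'I_p -> L) : (forall l, E (y l)) ->
  Psi (\sum_l iota (c l) * y l) = \sum_l c l *: Psi (y l).
Proof.
move=> Ey; apply/rowP => j; rewrite !mxE summxE big_distrl /=.
under eq_bigr do rewrite -mulrA.
rewrite /ell (coords_sum alpha_free); last by move=> l; apply: E_alpha.
by apply: eq_bigr => l _; rewrite !mxE.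
Qed.

Lemma Psi_mul_lam z x : E z -> Psi (z * lam x) = Psi z *m phi_of lami beta x.
Proof.
move=> Ez; apply/rowP => j; rewrite !mxE -mulrA lam_mul_alpha big_distrr /=.
under eq_bigr do rewrite mulrCA.
rewrite /ell (coords_sum alpha_free); last by move=> i; apply: E_alpha.
by apply: eq_bigr => i _; rewrite !mxE mulrC.
Qed.

Lemma Psi_eq0 z : E z -> Psi z = 0 -> z = 0.
Proof.
move=> Ez Psi0; apply/eqP; apply: contraTT coord1_i0 => z0; apply/negPn/eqP.
have [c Ec] := alpha_span (subfV E_subfield Ez).
rewrite -(divff z0) Ec big_distrr /=.
under eq_bigr do rewrite mulrCA.
rewrite (coords_sum alpha_free); last by move=> i; apply: E_alpha.
apply: big1 => i _.
by move/rowP/(_ i): Psi0; rewrite !mxE /ell => ->; rewrite mulr0.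
Qed.

Lemma PsiB z z' : E z -> E z' -> Psi (z - z') = Psi z - Psi z'.
Proof.
move=> Ez Ez'; apply/rowP => j; rewrite !mxE mulrBl /ell (coordsB alpha_free) //.
all: exact: E_alpha.
Qed.

Lemma Psi_surj v : exists2 z, E z & Psi z = v.
Proof.
pose G : 'M[K]_n := \matrix_(l, j) Psi (alpha l) 0 j.
have E_comb (c : 'rV[K]_n) : E (\sum_l iota (c 0 l) * alpha l).
  by apply: (subf_sum E_subfield) => l _; apply: (subfM E_subfield).
have GE (c : 'rV[K]_n) : c *m G = Psi (\sum_l iota (c 0 l) * alpha l).
  rewrite Psi_sum // mulmx_sum_row; apply: eq_bigr => l _.
  by congr (_ *: _); apply/rowP => j; rewrite !mxE.
have G_unit : G \in unitmx.
  rewrite -row_free_unit; apply/inj_row_free => c.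
  rewrite GE => /(Psi_eq0 (E_comb c)) /alpha_free c0.
  by apply/rowP => l; rewrite mxE c0.
exists (\sum_l iota ((v *m invmx G) 0 l) * alpha l); first exact: E_comb.
by rewrite -GE mulmxKV.
Qed.

Lemma right_dim_Kn_phi_at : right_dim (fun (v : 'rV[K]_n) x => v *m phi_of lami beta x) m.
Proof.
pose Z (c : 'rV[K]_m) := \sum_i lam (c 0 i) * w i.
have EZ c : E (Z c).
  by apply: (subf_sum E_subfield) => i _; apply: (subfM E_subfield).
exists (fun i => Psi (w i)).
apply: (@eq_bij _ _ (Psi \o Z)) => [|c /=]; last first.
  rewrite -[Z c]mul1r -(rmorph1 iota) big_distrr Psi_sum => [|i]; last first.
    exact: (subfM E_subfield).
  by apply: eq_bigr => i _; rewrite scale1r mulrC Psi_mul_lam.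
apply: (inj_surj_bij 0) => [c c' /= /eqP|v].
  rewrite -subr_eq0 -PsiB // => /eqP /(Psi_eq0 (subfB E_subfield (EZ c) (EZ c'))).
  rewrite /Z -sumrB; under eq_bigr do rewrite -mulrBl -rmorphB.
  move=> /w_free cc'0; apply/rowP => i; apply/eqP; rewrite -subr_eq0; apply/eqP.
  exact: cc'0.
have [z Ez <-] := Psi_surj v; have [cf ->] := w_span Ez.
by exists (\row_i cf i); congr Psi; apply: eq_bigr => i _; rewrite mxE.
Qed.

End Functional.

Lemma right_dim_Kn_phi : right_dim (fun (v : 'rV[K]_n) x => v *m phi_of lami beta x) m.
Proof. by have [i0 i0_1] := coords1_neq0; apply: (right_dim_Kn_phi_at i0_1). Qed.

End KnPhi.

Lemma left_dim_transport (K : fieldType) (V W : zmodType) (actV : K -> V -> V)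
    (actW : K -> W -> W) (f : V -> W) m :
  bijective f -> {morph f : u v / u + v} -> (forall x v, f (actV x v) = actW x (f v)) ->
  left_dim actW m -> left_dim actV m.
Proof.
move=> [g fK gK] fD f_act [w w_bij]; exists (g \o w).
have f0 : f 0 = 0 by apply: (addrI (f 0)); rewrite -fD !addr0.
apply: (eq_bij (bij_comp (Bijective gK fK) w_bij)) => c /=; apply: (can_inj fK).
by rewrite gK (big_morph f fD f0); apply: eq_bigr => i _; rewrite f_act gK.
Qed.

Lemma left_dim_rV (K : fieldType) n : left_dim (fun x (v : 'rV[K]_n) => x *: v) n.
Proof.
exists (fun i => delta_mx 0 i); apply: (eq_bij (inv_bij (fun _ => erefl))) => c.
by rewrite -row_sum_delta.
Qed.

Lemma has_rank_Kn_phi_iso (K : fieldType) (V : zmodType) (lact : K -> V -> V)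
    (ract : V -> K -> V) n (phi : K -> 'M[K]_n) :
  iso_to_Kn_phi lact ract phi -> right_dim (fun (v : 'rV[K]_n) x => v *m phi x) n ->
  has_rank lact ract n.
Proof.
move=> [f [f_bij fD fl fr]] rdim; split.
  exact: left_dim_transport f_bij fD fl (left_dim_rV K n).
change (left_dim (fun x v => ract v x) n).
exact: (left_dim_transport (actV := fun x v => ract v x)
  (actW := fun x (v : 'rV[K]_n) => v *m phi x) f_bij fD fr rdim).
Qed.

(** * The two embeddings of k(t) *)

Lemma leading_coefs_neq0 (k : fieldType) (a b c d e f : k) :
  (a != 0) || (d != 0) -> a * e = b * d ->
  b ^+ 2 != 4%:R * a * c -> e ^+ 2 != 4%:R * d * f -> a != 0 /\ d != 0.
Proof.
move=> Had Hae Hb He.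
have a0 : a != 0.
  apply: contraNneq Hb => a0; move: Had Hae; rewrite a0 eqxx mul0r /= => d0 /esym/eqP.
  by rewrite mulf_eq0 (negbTE d0) orbF => /eqP ->; rewrite expr0n mulr0 mul0r eqxx.
split=> //; apply: contraNneq He => d0; move: Hae; rewrite d0 mulr0 => /eqP.
by rewrite mulf_eq0 (negbTE a0) /= => /eqP ->; rewrite expr0n mulr0 mul0r eqxx.
Qed.

Section TwoEmbeddings.
Variables (k L : fieldType) (iota lam : {rmorphism ratfun k -> L}).
Hypothesis lam_iota : forall x : k, lam (rcst x) = iota (rcst x).

Lemma composite_quad_sqrt (al : k) (r : ratfun k) (s : L) :
  (forall x, iota x != s) -> s ^+ 2 = iota r -> lam (tvar k) = iota (rcst al) + s ->
  forall z, composite iota lam z <-> quad_span iota s z.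
Proof.
move=> s_new Hs lam_t.
have s_quad : s ^+ 2 = iota 0 * s + iota r by rewrite Hs rmorph0 mul0r add0r.
apply: (composite_quadE s_new s_quad).
  have -> : s = lam (tvar k) - iota (rcst al) by rewrite lam_t addrAC subrr add0r.
  by apply: (subfB (composite_subfield _ _)); [apply: composite_inr | apply: composite_inl].
apply: subfield_ratfun_image (quad_span_subfield s_new s_quad) _ _ => [x|].
  by rewrite lam_iota; exists (rcst x), 0; rewrite rmorph0 mul0r addr0.
by rewrite lam_t; exists (rcst al), 1; rewrite rmorph1 mul1r.
Qed.

Lemma composite_quad_tvar (be ga : ratfun k) :
  (forall x, lam x != iota (tvar k)) ->
  iota (tvar k) ^+ 2 = lam be * iota (tvar k) + lam ga ->
  forall z, composite iota lam z <-> quad_span lam (iota (tvar k)) z.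
Proof.
move=> T_new T_quad z.
have iota_quad x : quad_span lam (iota (tvar k)) (iota x).
  apply: (subfield_ratfun_image (mu := iota) (quad_span_subfield T_new T_quad)) => [c|].
    by rewrite -lam_iota; exists (rcst c), 0; rewrite rmorph0 mul0r addr0.
  by exists 0, 1; rewrite rmorph0 rmorph1 mul1r add0r.
rewrite -(composite_quadE T_new T_quad (composite_sym (composite_inl (tvar k))) iota_quad).
by split; apply: composite_sym.
Qed.

Lemma tvar_root_over_lam (al a b c d e f : k) (s : L) :
  d != 0 ->
  s ^+ 2 = iota ((rcst a * tvar k ^+ 2 + rcst b * tvar k + rcst c)
                / (rcst d * tvar k ^+ 2 + rcst e * tvar k + rcst f)) ->
  lam (tvar k) = iota (rcst al) + s ->
  lam (rcst a - (tvar k - rcst al) ^+ 2 * rcst d) * iota (tvar k) ^+ 2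
    + lam (rcst b - (tvar k - rcst al) ^+ 2 * rcst e) * iota (tvar k)
    + lam (rcst c - (tvar k - rcst al) ^+ 2 * rcst f) = 0.
Proof.
move=> d0; set N := rcst a * _ + _ + _; set D := rcst d * _ + _ + _ => Hs lam_t.
have D0 : D != 0 := quadratic_tvar_neq0 e f d0.
have s_lam : s = lam (tvar k - rcst al) by rewrite rmorphB lam_iota lam_t addrAC subrr add0r.
rewrite ![lam (_ - _)]rmorphB ![lam (_ * _)]rmorphM -s_lam !lam_iota.
transitivity (iota N - s ^+ 2 * iota D); first by rewrite /N /D; ring.
by rewrite Hs -rmorphM divfK // subrr.
Qed.

End TwoEmbeddings.

Unset Implicit Arguments. Set Strict Implicit.

Theorem proposition1p3
  (k : fieldType) (Hchar : [pchar k] =i pred0)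
  (L : closedFieldType) (iota : {rmorphism ratfun k -> L})
  (Lalg : forall z : L, exists2 p : {poly ratfun k}, p != 0 & root (map_poly iota p) z)
  (al a b c d e f : k)
  (Had : (a != 0) || (d != 0))
  (Hae : a * e = b * d)
  (Haf : a * f != c * d)
  (Hb : b ^+ 2 != 4%:R * a * c)
  (He : e ^+ 2 != 4%:R * d * f)
  (lam : {rmorphism ratfun k -> L})
  (Hlin : forall x : k, lam (rcst x) = iota (rcst x))
  (Hlt : exists s : L,
      s ^+ 2 = iota ((rcst a * tvar k ^+ 2 + rcst b * tvar k + rcst c)
                   / (rcst d * tvar k ^+ 2 + rcst e * tvar k + rcst f))
      /\ lam (tvar k) = iota (rcst al) + s)
  (n : nat) (alpha : 'I_n -> L)
  (Halpha_in : forall i, composite iota lam (alpha i))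
  (Halpha_free : forall cf : 'I_n -> ratfun k,
      \sum_(i < n) iota (cf i) * alpha i = 0 -> forall i, cf i = 0)
  (Halpha_span : forall z, composite iota lam z ->
      exists cf : 'I_n -> ratfun k, z = \sum_(i < n) iota (cf i) * alpha i)
  (lami : 'I_n -> ratfun k -> ratfun k)
  (Hlami : forall x, lam x = \sum_(i < n) iota (lami i x) * alpha i)
  (beta : 'I_n -> 'I_n -> 'I_n -> ratfun k)
  (Hbeta : forall i j, alpha i * alpha j = \sum_(l < n) iota (beta i j l) * alpha l)
  (V : zmodType) (lact : ratfun k -> V -> V) (ract : V -> ratfun k -> V)
  (Hsimple : simple_bimod lact ract)
  (Hcorr : iso_to_Kn_phi lact ract (phi_of lami beta)) :
  has_rank lact ract 2.
Proof.
have two : (2%:R : k) != 0 by move/pcharf0P: Hchar => ->.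
have [a0 d0] := leading_coefs_neq0 Had Hae Hb He.
have [s [Hs lam_t]] := Hlt.
have s_new := sqrt_new (fun y => quadratic_ratio_nonsqr y two a0 d0 Hae Haf) Hs.
have [T_new T_quad] := quadratic_root_new
  (fun y => tvar_quadratic_disc_nonsqr al y two a0 Hae Haf He)
  (tvar_root_over_lam Hlin d0 Hs lam_t).
have E_s := composite_quad_sqrt Hlin s_new Hs lam_t.
have E_T := composite_quad_tvar Hlin T_new T_quad.
have n2 := basis_card_quad s_new E_s Halpha_in Halpha_free Halpha_span; subst n.
apply: (has_rank_Kn_phi_iso Hcorr).
apply: (right_dim_Kn_phi (w := fun i : 'I_2 => iota (tvar k) ^+ i)
  (composite_subfield iota lam) (@composite_inl _ _ iota lam) (@composite_inr _ _ iota lam)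
  Halpha_in Halpha_free Halpha_span Hlami Hbeta).
- by move=> i; apply/E_T/quad_span_pow2.
- exact: free_pow2 T_new.
- by move=> z /E_T /span_pow2.
Qed.
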